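(* Every $\epsilon_4$-segment expath $P$ from $u$ to $v$ in $G$ is an $\epsilon_4$-expath.
   Context: $G=(V,E)$ is an undirected graph with $n$ vertices and real edge weights in $[1,W]$; $|P|$ is the weighted length of a path $P$ and $P[a,b]$ its subpath between $a$ and $b$. Let $V=U_1,U_2,\dots,U_p$ be subsets of $V$; the level $l(v)$ of $v$ is the largest $l$ with $v\in U_l$, and $G_i$ is the subgraph of $G$ induced by the vertices of level $\le i$. Let $\epsilon_4$ be a real parameter with $0<\epsilon_4<\sqrt2-1$. $\epsilon_4$-segments: for a path $P=(u=v_0,\dots,v_\ell=v)$ and $1\le i,j<\ell$, $v_i,v_j$ lie in the same segment if either both $|P[u,v_i]|,|P[u,v_j]|\le|P|/2$ and $\lfloor\log_{1+\epsilon_4}|P[u,v_i]|\rfloor=\lfloor\log_{1+\epsilon_4}|P[u,v_j]|\rfloor$, or both $|P[v_i,v]|,|P[v_j,v]|<|P|/2$ and $\lfloor\log_{1+\epsilon_4}|P[v_i,v]|\rfloor=\lfloor\log_{1+\epsilon_4}|P[v_j,v]|\rfloor$; classes are contiguous subpaths and $u,v$ are in no segment. $P$ is an $\epsilon_4$-segment expath if every segment $P[x,y]$ is a shortest path in $G_i$ for some $1\le i\le p$. Let $B=\lceil\log_{1+\epsilon_4}(nW)\rceil$. $P$ (from $u$ to $v$) is an $\epsilon_4$-expath if it is the concatenation $e_0,P_0,e_1,P_1,\dots,e_{2B+1},P_{2B+1},e_{2B+2}$ where each $e_i$ is empty or a single edge and each $P_k=P[u_k,v_k]$ is either empty or a shortest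 path in $G_i$ for some $1\le i\le p$, and moreover $|P[u,v_k]|\le(1+\epsilon_4)^k$ whenever $k<B+1$ and $|P[u_k,v]|\le(1+\epsilon_4)^{2B+1-k}$ whenever $k\ge B+1$ (for nonempty $P_k$). *)

From HB Require Import structures.
From mathcomp Require Import all_boot all_order all_algebra.
From mathcomp Require Import reals exp.
Set Implicit Arguments. Unset Strict Implicit. Unset Printing Implicit Defensive.
Import Order.TTheory GRing.Theory Num.Theory.
Local Open Scope ring_scope.

Section Expath.
Variables (R : realType) (T : finType).

Definition level (p : nat) (U : nat -> {set T}) (v : T) : nat :=
  \max_(1 <= l < p.+1 | v \in U l) l.

Definition Gadj (adj : rel T) (p : nat) (U : nat -> {set T}) (i : nat) : rel T :=
  fun x y => [&& adj x y, (level p U x <= i)%N & (level p U y <= i)%N].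

(* The path P = u :: s ; its i-th vertex (i = 0 .. size s). *)
Definition vtx (u : T) (s : seq T) (i : nat) : T := nth u (u :: s) i.

Definition seglen (w : T -> T -> R) (u : T) (s : seq T) (a b : nat) : R :=
  \sum_(a <= k < b) w (vtx u s k) (vtx u s k.+1).

Definition plen (w : T -> T -> R) (x : T) (q : seq T) : R :=
  seglen w x q 0 (size q).

Definition shortest_sub (adj : rel T) (w : T -> T -> R) (p : nat)
    (U : nat -> {set T}) (u : T) (s : seq T) (a b : nat) : Prop :=
  exists i : nat, [/\ (1 <= i <= p)%N,
    (forall c, (a <= c <= b)%N -> (level p U (vtx u s c) <= i)%N) &
    (forall q : seq T, path (Gadj adj p U i) (vtx u s a) q ->
       last (vtx u s a) q = vtx u s b ->
       seglen w u s a b <= plen w (vtx u s a) q)].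

Definition flog (eps x : R) : int := Num.floor (ln x / ln (1 + eps)).

Definition internal (s : seq T) (i : nat) : bool := (0 < i < size s)%N.

Definition same_seg (w : T -> T -> R) (eps : R) (u : T) (s : seq T) (i j : nat)
  : Prop :=
  let L := seglen w u s 0 (size s) in
  internal s i /\ internal s j /\
  ((seglen w u s 0 i <= L / 2 /\ seglen w u s 0 j <= L / 2 /\
    flog eps (seglen w u s 0 i) = flog eps (seglen w u s 0 j)) \/
   (seglen w u s i (size s) < L / 2 /\ seglen w u s j (size s) < L / 2 /\
    flog eps (seglen w u s i (size s)) = flog eps (seglen w u s j (size s)))).

(* P[v_a, v_b] is a segment: v_a, v_b are the first and last vertices of a class *)
Definition is_segment (w : T -> T -> R) (eps : R) (u : T) (s : seq T) (a b : nat)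
  : Prop :=
  same_seg w eps u s a b /\ (a <= b)%N /\
  (forall c, same_seg w eps u s a c -> (a <= c <= b)%N).

Definition segment_expath (adj : rel T) (w : T -> T -> R) (p : nat)
    (U : nat -> {set T}) (eps : R) (u : T) (s : seq T) : Prop :=
  forall a b, is_segment w eps u s a b -> shortest_sub adj w p U u s a b.

Definition Bnum (eps W : R) : nat :=
  `|Num.ceil (ln (#|T|%:R * W) / ln (1 + eps))|%N.

(* eps-expath: P = e_0 P_0 e_1 P_1 ... e_{2B+1} P_{2B+1} e_{2B+2}.
   Pieces are given by cut indices x 0 = 0 <= x 1 <= ... <= x (4B+5) = size s;
   piece j spans the vertices v_(x j) .. v_(x j.+1).  Even j = 2k is e_k
   (at most one edge); odd j = 2k+1 is P_k = P[u_k, v_k] with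
   u_k = v_(x (2k+1)), v_k = v_(x (2k+2)). *)
Definition expath (adj : rel T) (w : T -> T -> R) (p : nat)
    (U : nat -> {set T}) (eps W : R) (u : T) (s : seq T) : Prop :=
  let B := Bnum eps W in
  exists x : nat -> nat,
    [/\ x 0%N = 0%N, x (4 * B + 5)%N = size s,
     (forall j, (j < 4 * B + 5)%N -> (x j <= x j.+1)%N),
     (forall k, (k <= 2 * B + 2)%N -> (x (2 * k).+1 - x (2 * k) <= 1)%N) &
     (forall k, (k <= 2 * B + 1)%N ->
        x (2 * k).+1 = x (2 * k).+2 \/
        [/\ shortest_sub adj w p U u s (x (2 * k).+1) (x (2 * k).+2),
            ((k < B + 1)%N -> seglen w u s 0 (x (2 * k).+2) <= (1 + eps) ^+ k) &
            ((B + 1 <= k)%N ->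
               seglen w u s (x (2 * k).+1) (size s) <= (1 + eps) ^+ (2 * B + 1 - k))])].

End Expath.

(* Number the eps-segments of P from 1 to 2B along the path: an internal vertex
   v_i with |P[u,v_i]| <= |P|/2 gets floor(log_{1+eps} |P[u,v_i]|) + 1, any other
   gets 2B - floor(log_{1+eps} |P[v_i,v]|); both logarithms are below B because
   1 <= |P| < nW.  Two internal vertices lie in the same segment exactly when
   their numbers agree, and the numbering is nondecreasing along P, so segment k
   is a (possibly empty) block of consecutive vertices.  Letting P_k be segment
   k and e_k the edge entering it gives the decomposition of an eps-expath, and
   the length bounds on P_k are those encoded in its number. *)

From HB Require Import structures.
From mathcomp Require Import all_boot all_order all_algebra.
From mathcomp Require Import reals exp.
From mathcomp Require Import lra zify.
Import Order.TTheory GRing.Theory Num.Theory.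
Set Implicit Arguments. Unset Strict Implicit.
Local Open Scope ring_scope.

Section FloorLog.
Variables (R : realType) (eps : R).
Hypothesis eps_gt0 : 0 < eps.

Lemma ln1D_gt0 : 0 < ln (1 + eps).
Proof. by apply: ln_gt0; rewrite ltrDl. Qed.

Lemma flog_ge0 x : 1 <= x -> 0 <= flog eps x.
Proof. by move=> x_ge1; rewrite floor_ge0 divr_ge0 ?ln_ge0 // lerDl ltW. Qed.

Lemma flog_le x y : 0 < x -> x <= y -> flog eps x <= flog eps y.
Proof.
move=> x_gt0 le_xy; apply: le_floor.
by rewrite ler_pM2r ?invr_gt0 ?ln1D_gt0 // ler_ln ?posrE ?(lt_le_trans x_gt0).
Qed.

Lemma flogS_gt x (m : nat) : 0 < x -> flog eps x = m%:Z -> x < (1 + eps) ^+ m.+1.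
Proof.
move=> x_gt0 flog_x.
have := lt_succ_floor (ln x / ln (1 + eps)); rewrite -/(flog eps x) flog_x.
rewrite ltr_pdivrMr ?ln1D_gt0 // -PoszD addn1 => lt_ln.
by rewrite -ltr_ln ?posrE ?exprn_gt0 ?addr_gt0 // lnXn ?addr_gt0 // -mulr_natl.
Qed.

Lemma flog_lt_Bnum (T : finType) (W x : R) :
  0 < x -> x < #|T|%:R * W -> flog eps x < (Bnum T eps W)%:Z.
Proof.
move=> x_gt0 lt_xnW; rewrite /flog floor_lt_int /Bnum.
apply: lt_le_trans (le_trans (ceil_ge _) _); last first.
  by rewrite ler_int abszE; exact: ler_norm.
rewrite ltr_pM2r ?invr_gt0 ?ln1D_gt0 // ltr_ln ?posrE //.
exact: lt_trans lt_xnW.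
Qed.

End FloorLog.

Section WalkLength.
Variables (R : realType) (T : finType) (adj : rel T) (w : T -> T -> R).
Variables (u : T) (s : seq T).
Hypothesis s_path : path adj u s.

Lemma seglen_cat a b c :
  (a <= b <= c)%N -> seglen w u s a c = seglen w u s a b + seglen w u s b c.
Proof. by case/andP=> le_ab le_bc; rewrite /seglen (big_cat_nat le_ab le_bc). Qed.

Lemma adj_vtx k : (k < size s)%N -> adj (vtx u s k) (vtx u s k.+1).
Proof. exact: (pathP u s_path). Qed.

Lemma seglen_ge_nat a b :
  (forall x y, adj x y -> 1 <= w x y) -> (b <= size s)%N ->
  (b - a)%:R <= seglen w u s a b.
Proof.
move=> w_ge1 le_bs; rewrite -[leLHS]/(1 *+ (b - a)) -sumr_const_nat.
apply: ler_sum_nat => k /andP[_ lt_kb].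
exact/w_ge1/adj_vtx/(leq_trans lt_kb).
Qed.

Lemma seglen_le_mulrn (W : R) a b :
  (forall x y, adj x y -> w x y <= W) -> (b <= size s)%N ->
  seglen w u s a b <= W *+ (b - a).
Proof.
move=> w_leW le_bs; rewrite -sumr_const_nat.
apply: ler_sum_nat => k /andP[_ lt_kb].
exact/w_leW/adj_vtx/(leq_trans lt_kb).
Qed.

End WalkLength.

Lemma count_iota_downclosed (P : pred nat) m :
  (forall i j, (0 < i <= j)%N -> (j <= m)%N -> P j -> P i) ->
  forall i, (0 < i <= m)%N -> P i = (i <= count P (iota 1 m))%N.
Proof.
elim: m => [|m IHm] P_down i /andP[i_gt0 le_im]; first by case: i i_gt0 le_im.
rewrite -(addn1 m) iotaD count_cat /= addn0 add1n.
have [Pm1 | nPm1] := boolP (P m.+1).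
  have -> : count P (iota 1 m) = m.
    rewrite -[RHS](size_iota 1 m) -count_predT; apply: eq_in_count => j.
    by rewrite mem_iota => /andP[j_gt0 lt_jm]; apply: (P_down j m.+1); lia.
  by rewrite addn1 le_im; apply: (P_down i m.+1); rewrite ?i_gt0.
rewrite addn0; case: (ltngtP i m.+1) le_im => // [lt_im | ->] _.
  by apply: IHm; [move=> j k *; apply: (P_down j k); lia | rewrite i_gt0].
rewrite (negbTE nPm1); apply/esym/negbTE; rewrite -ltnNge ltnS.
by rewrite -[X in (_ <= X)%N](size_iota 1 m) count_size.
Qed.

Definition nbelow (f : nat -> nat) (m k : nat) : nat :=
  count (fun i => f i < k)%N (iota 1 m).

Section MonotoneLabels.
Variables (f : nat -> nat) (m : nat).

Lemma nbelow_le k : (nbelow f m k <= m)%N.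
Proof. by rewrite -[X in (_ <= X)%N](size_iota 1 m) count_size. Qed.

Lemma nbelow0 : nbelow f m 0 = 0%N.
Proof. by rewrite /nbelow (@eq_count _ _ pred0) ?count_pred0. Qed.

Lemma le_nbelow : {homo nbelow f m : k l / (k <= l)%N}.
Proof. by move=> k l le_kl; apply: sub_count => i /leq_trans; apply. Qed.

Lemma nbelow_all K :
  (forall i, (0 < i <= m)%N -> (f i < K)%N) -> nbelow f m K = m.
Proof.
move=> f_lt; rewrite /nbelow -[RHS](size_iota 1 m) -count_predT.
by apply: eq_in_count => i; rewrite mem_iota => i_in; apply: f_lt; lia.
Qed.

Hypothesis f_mono : forall i j, (0 < i <= j)%N -> (j <= m)%N -> (f i <= f j)%N.

Lemma ltn_label_nbelow i k : (0 < i <= m)%N -> (f i < k)%N = (i <= nbelow f m k)%N.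
Proof.
apply: count_iota_downclosed => j l le_jl le_lm; exact/leq_ltn_trans/f_mono.
Qed.

Lemma label_nbelowP i k :
  (0 < i <= m)%N -> (f i == k) = (nbelow f m k < i <= nbelow f m k.+1)%N.
Proof.
move=> i_in; rewrite -!ltn_label_nbelow // ltnNge -ltn_label_nbelow //.
by rewrite -leqNgt ltnS eq_le andbC.
Qed.

End MonotoneLabels.

(* With segment k occupying the vertices (c k, c k.+1], piece 2k is the edge
   entering segment k (empty when the segment is) and piece 2k+1 runs through it. *)
Definition expath_cut (c : nat -> nat) (M N j : nat) : nat :=
  if j == (2 * M).+1 then N
  else if odd j then minn (c j./2).+1 (c j./2.+1) else c j./2.

Section ExpathCut.
Variables (c : nat -> nat) (M N : nat).

Local Notation x := (expath_cut c M N).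

Lemma expath_cut_even k : x (2 * k) = c k.
Proof.
rewrite /expath_cut ifN; last by apply/eqP; lia.
by rewrite mul2n odd_double half_double.
Qed.

Lemma expath_cut_odd k :
  (k < M)%N -> x (2 * k).+1 = minn (c k).+1 (c k.+1).
Proof.
move=> lt_kM; rewrite /expath_cut ifN; last by apply/eqP; lia.
by rewrite mul2n /= odd_double uphalf_double.
Qed.

Lemma expath_cut_top : x (2 * M).+1 = N.
Proof. by rewrite /expath_cut eqxx. Qed.

Hypotheses (c_mono : {homo c : k l / (k <= l)%N}) (c_top : c M = N.-1).

Lemma expath_cut_step j : (j < (2 * M).+1)%N -> (x j <= x j.+1)%N.
Proof.
rewrite -(odd_double_half j) -mul2n; case: (odd j); rewrite /= ?add1n ?add0n;
  set k := j./2 => lt_j.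
  have -> : (2 * k).+2 = 2 * k.+1 by lia.
  by rewrite expath_cut_odd ?expath_cut_even ?geq_minr //; lia.
rewrite expath_cut_even; case: (ltngtP k M) => [lt_kM | | ->]; last 2 first.
- by move=> lt_Mk; lia.
- by rewrite expath_cut_top c_top leq_pred.
by rewrite expath_cut_odd // leq_min leqnSn c_mono.
Qed.

Lemma expath_cut_edge k : (k <= M)%N -> (x (2 * k).+1 - x (2 * k) <= 1)%N.
Proof.
rewrite expath_cut_even leq_eqVlt => /orP[/eqP -> | lt_kM].
  by rewrite expath_cut_top c_top; lia.
by rewrite expath_cut_odd //; lia.
Qed.

End ExpathCut.

Section Segments.
Variables (R : realType) (T : finType) (adj : rel T) (w : T -> T -> R).
Variables (W eps : R) (u : T) (s : seq T).
Hypotheses (eps_gt0 : 0 < eps) (s_path : path adj u s) (s_uniq : uniq (u :: s)).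
Hypotheses (w_ge1 : forall x y, adj x y -> 1 <= w x y)
           (w_leW : forall x y, adj x y -> w x y <= W).
Variables (p : nat) (U : nat -> {set T}).

Local Notation n := (size s).
Local Notation len := (seglen w u s).
Local Notation L := (len 0 n).
Local Notation pre i := (len 0 i).
Local Notation suf i := (len i n).
Local Notation B := (Bnum T eps W).
Local Notation lg x := (`|flog eps x|%N).

Lemma seglen_ge0 a b : (b <= n)%N -> 0 <= len a b.
Proof.
by move=> le_bn; exact: le_trans (ler0n _ _) (seglen_ge_nat s_path a w_ge1 le_bn).
Qed.

Lemma seglen_ge1 a b : (a < b <= n)%N -> 1 <= len a b.
Proof.
case/andP=> lt_ab le_bn; apply: le_trans (seglen_ge_nat s_path a w_ge1 le_bn).
by rewrite ler1n subn_gt0.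
Qed.

Lemma seglen_le_total a b : (a <= b <= n)%N -> len a b <= L.
Proof.
case/andP=> le_ab le_bn; have le_an := leq_trans le_ab le_bn.
rewrite (@seglen_cat _ _ w u s 0 a n) ?le_an // (@seglen_cat _ _ w u s a b n) ?le_ab //.
by have := seglen_ge0 0 le_an; have := seglen_ge0 b (leqnn n); lra.
Qed.

Lemma seglen_total_lt_card : (0 < n)%N -> L < #|T|%:R * W.
Proof.
move=> n_gt0; have edge0 := adj_vtx s_path n_gt0.
have W_ge1 := le_trans (w_ge1 edge0) (w_leW edge0).
have n_lt_T : (n < #|T|)%N.
  by move/card_uniqP: s_uniq => /= <-; apply: max_card.
apply: le_lt_trans (seglen_le_mulrn s_path 0 w_leW (leqnn n)) _.
rewrite subn0 -(mulr_natl W n) ltr_pM2r ?ltr_nat //; exact: lt_le_trans ltr01 W_ge1.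
Qed.

Lemma flog_seglenE a b : (a < b <= n)%N -> flog eps (len a b) = (lg (len a b))%:Z.
Proof. by move=> ab_in; rewrite gez0_abs // flog_ge0 // seglen_ge1. Qed.

Lemma lg_seglen_lt_Bnum a b : (a < b <= n)%N -> (lg (len a b) < B)%N.
Proof.
move=> ab_in; rewrite -ltz_nat -flog_seglenE //.
apply: flog_lt_Bnum => //; first exact: lt_le_trans ltr01 (seglen_ge1 ab_in).
apply: le_lt_trans (seglen_total_lt_card _); first by apply: seglen_le_total; lia.
by case/andP: ab_in => lt_ab le_bn; apply: leq_trans le_bn; apply: leq_trans lt_ab.
Qed.

Definition slot i : nat :=
  if pre i <= L / 2 then (lg (pre i)).+1 else (2 * B - lg (suf i))%N.

Lemma suf_lt_half i : (i <= n)%N -> (suf i < L / 2) = ~~ (pre i <= L / 2).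
Proof.
move=> le_in; rewrite -ltNge (@seglen_cat _ _ w u s 0 i n) //.
by apply/idP/idP => ?; lra.
Qed.

Lemma slot_le_B i : internal s i -> (slot i <= B)%N = (pre i <= L / 2).
Proof.
move=> i_in; have := @lg_seglen_lt_Bnum 0 i; have := @lg_seglen_lt_Bnum i n.
by rewrite /slot /internal in i_in *; case: ifP => _; lia.
Qed.

Lemma slot_le_2B i : internal s i -> (slot i <= 2 * B)%N.
Proof.
move=> i_in; have := @lg_seglen_lt_Bnum 0 i.
by rewrite /slot /internal in i_in *; case: ifP => _; lia.
Qed.

Lemma slot_eqE i j : internal s i -> internal s j ->
  slot i = slot j <->
  (pre i <= L / 2 /\ pre j <= L / 2 /\ flog eps (pre i) = flog eps (pre j)) \/
  (suf i < L / 2 /\ suf j < L / 2 /\ flog eps (suf i) = flog eps (suf j)).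
Proof.
move=> i_in j_in; have := slot_le_B i_in; have := slot_le_B j_in.
have := @lg_seglen_lt_Bnum i n; have := @lg_seglen_lt_Bnum j n.
have := @flog_seglenE 0 i; have := @flog_seglenE 0 j.
have := @flog_seglenE i n; have := @flog_seglenE j n.
move: i_in j_in; rewrite /internal => i_in j_in.
rewrite !suf_lt_half /slot; try lia.
by case: (pre i <= L / 2); case: (pre j <= L / 2) => /=; lia.
Qed.

Lemma slot_mono i j : (0 < i <= j)%N -> (j <= n.-1)%N -> (slot i <= slot j)%N.
Proof.
move=> ij_in le_jn.
have i_in : internal s i by rewrite /internal; lia.
have j_in : internal s j by rewrite /internal; lia.
have pre_ij : pre i <= pre j.
  by rewrite (@seglen_cat _ _ w u s 0 i j) ?lerDl ?seglen_ge0 //; lia.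
have suf_ji : suf j <= suf i.
  by rewrite (@seglen_cat _ _ w u s i j n) ?lerDr ?seglen_ge0 //; lia.
have pre_gt0 : 0 < pre i by apply: lt_le_trans (seglen_ge1 _); rewrite ?ltr01 //; lia.
have suf_gt0 : 0 < suf j by apply: lt_le_trans (seglen_ge1 _); rewrite ?ltr01 //; lia.
have : pre j <= L / 2 -> pre i <= L / 2 := le_trans pre_ij.
have := flog_le eps_gt0 pre_gt0 pre_ij; have := flog_le eps_gt0 suf_gt0 suf_ji.
have := slot_le_B i_in; have := slot_le_B j_in.
have := @flog_seglenE 0 i; have := @flog_seglenE 0 j.
have := @flog_seglenE i n; have := @flog_seglenE j n.
have := @lg_seglen_lt_Bnum i n; have := @lg_seglen_lt_Bnum j n.
by rewrite /slot; case: (pre i <= L / 2); case: (pre j <= L / 2) => /=; lia.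
Qed.

Lemma pre_lt_slot i : internal s i -> (slot i <= B)%N -> pre i < (1 + eps) ^+ slot i.
Proof.
move=> i_in; rewrite slot_le_B // /slot => ->.
have i_in' : (0 < i <= n)%N by move: i_in; rewrite /internal; lia.
by apply: flogS_gt => //; [apply: lt_le_trans (seglen_ge1 i_in') | apply: flog_seglenE].
Qed.

Lemma suf_lt_slot i : internal s i -> (B < slot i)%N ->
  suf i < (1 + eps) ^+ (2 * B + 1 - slot i).
Proof.
move=> i_in; rewrite ltnNge slot_le_B // => /negbTE second.
have i_in' : (i < n <= n)%N by move: i_in; rewrite /internal; lia.
have -> : (2 * B + 1 - slot i)%N = (lg (suf i)).+1.
  by rewrite /slot second; have := lg_seglen_lt_Bnum i_in'; lia.
by apply: flogS_gt => //; [apply: lt_le_trans (seglen_ge1 i_in') | apply: flog_seglenE].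
Qed.

Lemma same_segE i j :
  same_seg w eps u s i j <-> [/\ internal s i, internal s j & slot i = slot j].
Proof.
split=> [[i_in [j_in /(slot_eqE i_in j_in) eq_ij]] | [i_in j_in /(slot_eqE i_in j_in)]].
  by split.
by do !split.
Qed.

Local Notation c := (nbelow slot n.-1).

Lemma nbelow_internal i k : (c k < i <= c k.+1)%N -> internal s i.
Proof. by have := nbelow_le slot n.-1 k.+1; rewrite /internal; lia. Qed.

Lemma slot_nbelow i k : (c k < i <= c k.+1)%N -> slot i = k.
Proof.
move=> i_in; have := nbelow_internal i_in; rewrite /internal => i_int.
by apply/eqP; rewrite (label_nbelowP slot_mono) //; lia.
Qed.

Lemma nbelow_slot_top : c (2 * B + 2) = n.-1.
Proof.
apply: nbelow_all => i i_in.
have i_int : internal s i by rewrite /internal; lia.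
by have := slot_le_2B i_int; lia.
Qed.

Lemma nbelow_class_segment k :
  ((c k).+1 < c k.+1)%N -> is_segment w eps u s (c k).+1 (c k.+1).
Proof.
move=> lt_ab; have a_in : (c k < (c k).+1 <= c k.+1)%N by lia.
have b_in : (c k < c k.+1 <= c k.+1)%N by lia.
split; first by apply/same_segE; rewrite (slot_nbelow a_in) (slot_nbelow b_in)
  (nbelow_internal a_in) (nbelow_internal b_in).
split; first exact: ltnW.
move=> j /same_segE[_ j_in]; rewrite (slot_nbelow a_in) => /esym/eqP.
by rewrite (label_nbelowP slot_mono) //; move: j_in; rewrite /internal; lia.
Qed.

Lemma nbelow_class_pre k :
  (c k < c k.+1)%N -> (k <= B)%N -> pre (c k.+1) <= (1 + eps) ^+ k.
Proof.
move=> ne_k le_kB; have b_in : (c k < c k.+1 <= c k.+1)%N by rewrite ne_k leqnn.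
have := pre_lt_slot (nbelow_internal b_in); rewrite (slot_nbelow b_in) => pre_lt.
exact/ltW/pre_lt.
Qed.

Lemma nbelow_class_suf k :
  (c k < c k.+1)%N -> (B < k)%N -> suf (c k).+1 <= (1 + eps) ^+ (2 * B + 1 - k).
Proof.
move=> ne_k lt_Bk; have a_in : (c k < (c k).+1 <= c k.+1)%N by rewrite ltnSn ne_k.
have := suf_lt_slot (nbelow_internal a_in); rewrite (slot_nbelow a_in) => suf_lt.
exact/ltW/suf_lt.
Qed.

Lemma segment_expath_expath :
  segment_expath adj w p U eps u s -> expath adj w p U eps W u s.
Proof.
move=> s_seg; have c_mono : {homo c : k l / (k <= l)%N} := le_nbelow _ _.
exists (expath_cut c (2 * B + 2) n); split.
- by have := expath_cut_even c (2 * B + 2) n 0; rewrite muln0 => ->; exact: nbelow0.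
- by rewrite (_ : 4 * B + 5 = (2 * (2 * B + 2)).+1)%N ?expath_cut_top //; lia.
- by move=> j lt_j; apply: expath_cut_step; rewrite ?nbelow_slot_top //; lia.
- by move=> k le_k; apply: expath_cut_edge; rewrite ?nbelow_slot_top //; lia.
move=> k le_k; rewrite expath_cut_odd ?nbelow_slot_top //; last lia.
rewrite (_ : (2 * k).+2 = 2 * k.+1)%N ?expath_cut_even; last lia.
have [_ | lt_ab] := leqP (c k.+1) (c k).+1; [by left | right; split].
- exact/s_seg/nbelow_class_segment.
- by move=> lt_kB; apply: nbelow_class_pre (ltnW lt_ab) _; lia.
- by move=> le_Bk; apply: nbelow_class_suf (ltnW lt_ab) _; lia.
Qed.

End Segments.

Theorem lemma4p5 (R : realType) (T : finType) (adj : rel T) (w : T -> T -> R)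
    (W : R) (p : nat) (U : nat -> {set T}) (eps : R) (u v : T) (s : seq T) :
  symmetric adj -> irreflexive adj ->
  (forall x y, w x y = w y x) ->
  (forall x y, adj x y -> 1 <= w x y <= W) ->
  (1 <= p)%N -> U 1%N = [set: T] ->
  0 < eps -> eps < Num.sqrt 2 - 1 ->
  path adj u s -> uniq (u :: s) -> last u s = v ->
  segment_expath adj w p U eps u s ->
  expath adj w p U eps W u s.
Proof.
move=> _ _ _ w_bounds _ _ eps_gt0 _ s_path s_uniq _.
by apply: segment_expath_expath => // x y /w_bounds /andP[].
Qed.
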